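(* Let $3\le d_1\le d_2\le d_3$. In $\mathbb{C}^{d_1}\otimes\mathbb{C}^{d_2}\otimes\mathbb{C}^{d_3}$ consider the following $d_2+2d_3-2$ product states: $|0-i\rangle_1|0\rangle_2|i\rangle_3$ for $1\le i\le d_1-1$; $|i\rangle_1|0-i\rangle_2|0\rangle_3$ for $1\le i\le d_1-1$; $|0\rangle_1|i\rangle_2|0-i\rangle_3$ for $1\le i\le d_2-1$; $|1\rangle_1|0-i\rangle_2|i\rangle_3$ for $d_1\le i\le d_2-1$; $|m_i\rangle_1|1\rangle_2|(i-1)-i\rangle_3$ for $d_2\le i\le d_3-1$, where $m_i=2$ if $i$ is even and $m_i=1$ if $i$ is odd; $|0-2\rangle_1|0-2\rangle_2|i\rangle_3$ for $d_1\le i\le d_3-1$; and the stopper state $|0+1+\cdots+(d_1-1)\rangle_1|0+1+\cdots+(d_2-1)\rangle_2|0+1+\cdots+(d_3-1)\rangle_3$. These states are pairwise orthogonal, and for every party $t\in\{1,2,3\}$, every orthogonality-preserving local POVM element $E_t$ on party $t$ for this set is proportional to the identity. Consequently, this set cannot be perfectly distinguished by LOCC.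
   Context: $\{|i\rangle\}$ is the computational basis; $|i_1\pm i_2\pm\cdots\pm i_r\rangle$ denotes $\frac{1}{\sqrt r}(|i_1\rangle\pm|i_2\rangle\pm\cdots\pm|i_r\rangle)$; subscripts indicate the party; ranges $a\le i\le b$ with $a>b$ are empty. For a set $\{|\psi_a\rangle\}$ of pairwise orthogonal states in $\mathbb{C}^{d_1}\otimes\cdots\otimes\mathbb{C}^{d_n}$, a positive semidefinite operator $E_t$ on $\mathbb{C}^{d_t}$ (a POVM element $M_t^\dagger M_t$ of a measurement by party $t$) is called orthogonality-preserving if $\langle\psi_a|(\mathbb{I}\otimes\cdots\otimes E_t\otimes\cdots\otimes\mathbb{I})|\psi_b\rangle=0$ for all $a\neq b$; the measurement is trivial if all its POVM elements are proportional to the identity. A set of orthogonal states for which every party can only perform trivial orthogonality-preserving measurements cannot be perfectly distinguished by LOCC. *)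

From HB Require Import structures.
From mathcomp Require Import all_boot all_order all_algebra.
Set Implicit Arguments. Unset Strict Implicit. Unset Printing Implicit Defensive.
Import Order.TTheory GRing.Theory Num.Theory.
Local Open Scope ring_scope.

Section QDefs.
Variable C : numClosedFieldType.

Definition vec (n : nat) := 'I_n -> C.

(* |i> in C^n (i a natural number; the zero vector if i >= n, never used) *)
Definition ket (n i : nat) : vec n := fun k => ((k : nat) == i)%:R.
Arguments ket : clear implicits.

(* |i - j> = (|i> - |j>)/sqrt 2 *)
Definition ketm (n i j : nat) : vec n :=
  fun k => (sqrtC 2)^-1 * (ket n i k - ket n j k).
Arguments ketm : clear implicits.

(* |0 + 1 + ... + (n-1)> = (|0> + ... + |n-1>)/sqrt n *)
Definition ketall (n : nat) : vec n := fun _ => (sqrtC n%:R)^-1.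
Arguments ketall : clear implicits.

Definition vec3 (d1 d2 d3 : nat) := ('I_d1 * 'I_d2 * 'I_d3)%type -> C.

Definition prod3 d1 d2 d3 (u : vec d1) (v : vec d2) (w : vec d3) : vec3 d1 d2 d3 :=
  fun x => u x.1.1 * v x.1.2 * w x.2.

Definition inner3 d1 d2 d3 (psi phi : vec3 d1 d2 d3) : C :=
  \sum_x (psi x)^* * phi x.

Definition act1 d1 d2 d3 (E : 'M[C]_d1) (phi : vec3 d1 d2 d3) : vec3 d1 d2 d3 :=
  fun x => \sum_j E x.1.1 j * phi (j, x.1.2, x.2).
Definition act2 d1 d2 d3 (E : 'M[C]_d2) (phi : vec3 d1 d2 d3) : vec3 d1 d2 d3 :=
  fun x => \sum_j E x.1.2 j * phi (x.1.1, j, x.2).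
Definition act3 d1 d2 d3 (E : 'M[C]_d3) (phi : vec3 d1 d2 d3) : vec3 d1 d2 d3 :=
  fun x => \sum_j E x.2 j * phi (x.1.1, x.1.2, j).

Definition psd n (E : 'M[C]_n) : Prop :=
  forall v : vec n, 0 <= \sum_i \sum_j (v i)^* * E i j * v j.

Definition pairwise_orth d1 d2 d3 (S : seq (vec3 d1 d2 d3)) : Prop :=
  forall a b, (a < size S)%N -> (b < size S)%N -> a <> b ->
    inner3 (nth (fun _ => 0) S a) (nth (fun _ => 0) S b) = 0.

Definition OP1 d1 d2 d3 (S : seq (vec3 d1 d2 d3)) (E : 'M[C]_d1) : Prop :=
  forall a b, (a < size S)%N -> (b < size S)%N -> a <> b ->
    inner3 (nth (fun _ => 0) S a) (act1 E (nth (fun _ => 0) S b)) = 0.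
Definition OP2 d1 d2 d3 (S : seq (vec3 d1 d2 d3)) (E : 'M[C]_d2) : Prop :=
  forall a b, (a < size S)%N -> (b < size S)%N -> a <> b ->
    inner3 (nth (fun _ => 0) S a) (act2 E (nth (fun _ => 0) S b)) = 0.
Definition OP3 d1 d2 d3 (S : seq (vec3 d1 d2 d3)) (E : 'M[C]_d3) : Prop :=
  forall a b, (a < size S)%N -> (b < size S)%N -> a <> b ->
    inner3 (nth (fun _ => 0) S a) (act3 E (nth (fun _ => 0) S b)) = 0.

(* indices a <= i <= b (empty if a > b) *)
Definition rng (a b : nat) : seq nat := iota a (b.+1 - a).

Definition lemma4_states (d1 d2 d3 : nat) : seq (vec3 d1 d2 d3) :=
  [seq prod3 (ketm d1 0 i) (ket d2 0) (ket d3 i) | i <- rng 1 d1.-1] ++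
  [seq prod3 (ket d1 i) (ketm d2 0 i) (ket d3 0) | i <- rng 1 d1.-1] ++
  [seq prod3 (ket d1 0) (ket d2 i) (ketm d3 0 i) | i <- rng 1 d2.-1] ++
  [seq prod3 (ket d1 1) (ketm d2 0 i) (ket d3 i) | i <- rng d1 d2.-1] ++
  [seq prod3 (ket d1 (if odd i then 1 else 2)) (ket d2 1) (ketm d3 i.-1 i)
     | i <- rng d2 d3.-1] ++
  [seq prod3 (ketm d1 0 2) (ketm d2 0 2) (ket d3 i) | i <- rng d1 d3.-1] ++
  [:: prod3 (ketall d1) (ketall d2) (ketall d3)].

End QDefs.
Arguments ket : clear implicits.
Arguments ketm : clear implicits.
Arguments ketall : clear implicits.
Arguments lemma4_states : clear implicits.

From HB Require Import structures.
From mathcomp Require Import all_boot all_order all_algebra.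
From mathcomp Require Import zify ring.
Import Order.TTheory GRing.Theory Num.Theory.
Local Open Scope ring_scope.
Set Implicit Arguments. Unset Strict Implicit.

(* Every state of the set is a product of real vectors, so an overlap <psi_p| E_t |psi_q>
   factors into the bilinear form of E_t on the party-t factors times the plain overlaps
   of the two other factors.  Whenever those two overlaps are nonzero, orthogonality
   preservation kills the party-t form, and suitable pairs of states make every
   off-diagonal entry of E_t vanish.  Once E_t is diagonal, pairing the stopper with a
   state whose party-t factor is |a-b> gives E_t(a,a) = E_t(b,b); these equalities connect
   all diagonal entries, so E_t is scalar.  Orthogonality of the states is the same
   factorisation with E_t = I. *)

Lemma pairwise_nth_map (T : eqType) (U : Type) (f : T -> U) (s : seq T) (x0 : U)
    (P : U -> U -> Prop) : uniq s ->
  (forall a b, (a < size (map f s))%N -> (b < size (map f s))%N -> a <> b ->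
     P (nth x0 (map f s) a) (nth x0 (map f s) b)) <->
  {in s &, forall p q, p <> q -> P (f p) (f q)}.
Proof.
move=> uniq_s; rewrite size_map; split=> [Pnth p q sp sq neq_pq | Pin a b sa sb neq_ab].
  have := Pnth (index p s) (index q s).
  rewrite !(nth_map p) ?index_mem // !nth_index //; apply; rewrite ?index_mem //.
  by move=> eq_idx; apply: neq_pq; rewrite -(nth_index p sp) eq_idx nth_index.
have [y0 _] : exists y0 : T, true by case: s {uniq_s Pin sb} sa => // y; exists y.
rewrite !(nth_map y0) //; apply: Pin; rewrite ?mem_nth //.
by move/eqP; rewrite nth_uniq // => /eqP.
Qed.

Lemma sum_triple (T1 T2 T3 : finType) (R : nmodType) (f : T1 * T2 * T3 -> R) :
  \sum_x f x = \sum_i \sum_j \sum_k f (i, j, k).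
Proof.
rewrite pair_bigA (pair_bigA _ (fun p k => f (p.1, p.2, k))).
by apply: eq_bigr => -[[]].
Qed.

Lemma mulr_sum3 (R : pzSemiRingType) (T1 T2 T3 : finType)
    (a : T1 -> R) (b : T2 -> R) (c : T3 -> R) :
  (\sum_i a i) * (\sum_j b j) * (\sum_k c k) = \sum_i \sum_j \sum_k a i * b j * c k.
Proof.
rewrite -mulrA mulr_suml; apply: eq_bigr => i _; rewrite mulr_suml mulr_sumr.
by apply: eq_bigr => j _; rewrite !mulr_sumr; apply: eq_bigr => k _; rewrite mulrA.
Qed.

Section KetAlgebra.
Variable C : numClosedFieldType.

Definition real_vec n (u : vec C n) := forall k, (u k)^* = u k.
Definition dotv n (u v : vec C n) : C := \sum_k u k * v k.
Definition bform n (E : 'M[C]_n) (u v : vec C n) : C :=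
  \sum_i \sum_j u i * E i j * v j.
Definition isqrt (n : nat) : C := (sqrtC n%:R)^-1.

Lemma conj_isqrt n : (isqrt n)^* = isqrt n.
Proof. by rewrite fmorphV /= geC0_conj // sqrtC_ge0 ler0n. Qed.

Lemma isqrt_eq0 n : (isqrt n == 0) = (n == 0)%N.
Proof. by rewrite invr_eq0 sqrtC_eq0 pnatr_eq0. Qed.

Lemma real_ket n i : real_vec (ket C n i).
Proof. by move=> k; rewrite conjC_nat. Qed.

Lemma real_ketm n i j : real_vec (ketm C n i j).
Proof. by move=> k; rewrite rmorphM rmorphB /= !conjC_nat conj_isqrt. Qed.

Lemma real_ketall n : real_vec (ketall C n).
Proof. by move=> k; rewrite conj_isqrt. Qed.

Lemma sum_nat_delta n i (F : nat -> C) :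
  \sum_(k < n) ((k : nat) == i)%:R * F k = if (i < n)%N then F i else 0.
Proof.
case: ifP => [lt_in|ge_in].
  rewrite (bigD1 (Ordinal lt_in)) //= eqxx mul1r big1 ?addr0 // => k.
  by rewrite -val_eqE /= => /negbTE->; rewrite mul0r.
by rewrite big1 // => k _; case: eqP (ltn_ord k) => [->|_]; rewrite ?ge_in ?mul0r.
Qed.

Lemma sum_ord_delta n (a : 'I_n) (F : 'I_n -> C) :
  \sum_(i < n) ((i : nat) == a)%:R * F i = F a.
Proof.
rewrite (bigD1 a) //= eqxx mul1r big1 ?addr0 // => i.
by rewrite -val_eqE => /negbTE->; rewrite mul0r.
Qed.

Lemma dotvC n (u v : vec C n) : dotv u v = dotv v u.
Proof. by apply: eq_bigr => k _; rewrite mulrC. Qed.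

Lemma dotv_ket_ket n i j :
  dotv (ket C n i) (ket C n j) = if (i < n)%N then (i == j)%:R else 0.
Proof. exact: (sum_nat_delta n i (fun k => (k == j)%:R)). Qed.

Lemma dotv_ket_ketall n i :
  dotv (ket C n i) (ketall C n) = if (i < n)%N then isqrt n else 0.
Proof. exact: (sum_nat_delta n i (fun _ => isqrt n)). Qed.

Lemma dotv_ketall_ket n i :
  dotv (ketall C n) (ket C n i) = if (i < n)%N then isqrt n else 0.
Proof. by rewrite dotvC dotv_ket_ketall. Qed.

Lemma dotv_ketmL n a b (v : vec C n) :
  dotv (ketm C n a b) v = isqrt 2 * (dotv (ket C n a) v - dotv (ket C n b) v).
Proof.
rewrite /dotv -sumrB mulr_sumr; apply: eq_bigr => k _.
by rewrite /ketm /isqrt; ring.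
Qed.

Lemma dotv_ketmR n a b (u : vec C n) :
  dotv u (ketm C n a b) = isqrt 2 * (dotv u (ket C n a) - dotv u (ket C n b)).
Proof. by rewrite dotvC dotv_ketmL !(dotvC u). Qed.

Lemma bform_ketmL n (E : 'M[C]_n) a b v :
  bform E (ketm C n a b) v = isqrt 2 * (bform E (ket C n a) v - bform E (ket C n b) v).
Proof.
rewrite /bform -sumrB mulr_sumr; apply: eq_bigr => i _.
rewrite -sumrB mulr_sumr; apply: eq_bigr => j _.
by rewrite /ketm /isqrt; ring.
Qed.

Lemma bform_ketmR n (E : 'M[C]_n) a b u :
  bform E u (ketm C n a b) = isqrt 2 * (bform E u (ket C n a) - bform E u (ket C n b)).
Proof.
rewrite /bform -sumrB mulr_sumr; apply: eq_bigr => i _.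
rewrite -sumrB mulr_sumr; apply: eq_bigr => j _.
by rewrite /ketm /isqrt; ring.
Qed.

Lemma bform_ketL n (E : 'M[C]_n) (a : 'I_n) v :
  bform E (ket C n a) v = \sum_j E a j * v j.
Proof.
rewrite -(sum_ord_delta a (fun i => \sum_j E i j * v j)); apply: eq_bigr => i _.
by rewrite mulr_sumr; apply: eq_bigr => j _; rewrite mulrA.
Qed.

Lemma bform_ket_ket n (E : 'M[C]_n) (a b : 'I_n) :
  bform E (ket C n a) (ket C n b) = E a b.
Proof.
rewrite bform_ketL -(sum_ord_delta b (E a)).
by apply: eq_bigr => j _; rewrite mulrC.
Qed.

Lemma bform_ketallL n (E : 'M[C]_n) v :
  bform E (ketall C n) v = isqrt n * \sum_(k < n) bform E (ket C n k) v.
Proof.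
rewrite mulr_sumr; apply: eq_bigr => k _; rewrite bform_ketL mulr_sumr.
by apply: eq_bigr => j _; rewrite mulrA.
Qed.

Section ProductStates.
Variables (d1 d2 d3 : nat) (u1 v1 : vec C d1) (u2 v2 : vec C d2) (u3 v3 : vec C d3).
Hypotheses (r1 : real_vec u1) (r2 : real_vec u2) (r3 : real_vec u3).

Lemma inner3_prod3 :
  inner3 (prod3 u1 u2 u3) (prod3 v1 v2 v3) = dotv u1 v1 * dotv u2 v2 * dotv u3 v3.
Proof.
rewrite /inner3 sum_triple mulr_sum3.
do 3![apply: eq_bigr => ? _]; rewrite /prod3 /= !rmorphM /= r1 r2 r3; ring.
Qed.

Lemma inner3_act1_prod3 (E : 'M[C]_d1) :
  inner3 (prod3 u1 u2 u3) (act1 E (prod3 v1 v2 v3)) =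
  bform E u1 v1 * dotv u2 v2 * dotv u3 v3.
Proof.
rewrite /inner3 sum_triple /bform mulr_sum3.
do 3![apply: eq_bigr => ? _]; rewrite /act1 /prod3 /= !rmorphM /= r1 r2 r3.
by rewrite !(mulr_sumr, mulr_suml); apply: eq_bigr => ? _; ring.
Qed.

Lemma inner3_act2_prod3 (E : 'M[C]_d2) :
  inner3 (prod3 u1 u2 u3) (act2 E (prod3 v1 v2 v3)) =
  dotv u1 v1 * bform E u2 v2 * dotv u3 v3.
Proof.
rewrite /inner3 sum_triple /bform mulr_sum3.
do 3![apply: eq_bigr => ? _]; rewrite /act2 /prod3 /= !rmorphM /= r1 r2 r3.
by rewrite !(mulr_sumr, mulr_suml); apply: eq_bigr => ? _; ring.
Qed.

Lemma inner3_act3_prod3 (E : 'M[C]_d3) :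
  inner3 (prod3 u1 u2 u3) (act3 E (prod3 v1 v2 v3)) =
  dotv u1 v1 * dotv u2 v2 * bform E u3 v3.
Proof.
rewrite /inner3 sum_triple /bform mulr_sum3.
do 3![apply: eq_bigr => ? _]; rewrite /act3 /prod3 /= !rmorphM /= r1 r2 r3.
by rewrite !(mulr_sumr, mulr_suml); apply: eq_bigr => ? _; ring.
Qed.

End ProductStates.

Section Diagonal.
Variables (n : nat) (E : 'M[C]_n).
Local Notation e i j := (bform E (ket C n i) (ket C n j)).

Lemma bform_ketmL_eq0 a b v :
  bform E (ketm C n a b) v = 0 -> bform E (ket C n b) v = 0 ->
  bform E (ket C n a) v = 0.
Proof.
by rewrite bform_ketmL => /eqP; rewrite mulf_eq0 isqrt_eq0 subr_eq0 /= => /eqP->.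
Qed.

Lemma bform_ketmR_eq0 a b u :
  bform E u (ketm C n a b) = 0 -> bform E u (ket C n b) = 0 ->
  bform E u (ket C n a) = 0.
Proof.
by rewrite bform_ketmR => /eqP; rewrite mulf_eq0 isqrt_eq0 subr_eq0 /= => /eqP->.
Qed.

Definition ket_diagonal : Prop :=
  forall i j, (i < n)%N -> (j < n)%N -> i != j -> e i j = 0.

Hypothesis diagE : ket_diagonal.

Lemma bform_ketall_ket b :
  (b < n)%N -> bform E (ketall C n) (ket C n b) = isqrt n * e b b.
Proof.
move=> lt_bn; rewrite bform_ketallL (bigD1 (Ordinal lt_bn)) //= big1 ?addr0 // => k.
by rewrite -val_eqE /= => neq_kb; apply: diagE.
Qed.

Lemma diag_eq_of_ketall_ketm a b : (a < n)%N -> (b < n)%N ->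
  bform E (ketall C n) (ketm C n a b) = 0 -> e a a = e b b.
Proof.
move=> lt_an lt_bn; rewrite bform_ketmR !bform_ketall_ket // -mulrBr => /eqP.
by rewrite !mulf_eq0 !isqrt_eq0 subr_eq0 /= => /orP[n0|/eqP]; first lia.
Qed.

Lemma scalar_of_ket_diagonal :
  (forall i, (i < n)%N -> e i i = e 0 0) -> E = (e 0 0)%:M.
Proof.
move=> diag_eq; apply/matrixP => a b; rewrite mxE -bform_ket_ket.
case: (eqVneq a b) => [<-|neq_ab]; first by rewrite mulr1n diag_eq.
by rewrite mulr0n diagE.
Qed.

End Diagonal.

End KetAlgebra.

#[local] Hint Resolve real_ket real_ketm real_ketall : core.

Section States.
Variables (C : numClosedFieldType) (d1 d2 d3 : nat).

(* The tag (k, i) names the state with index i in the k-th family of the statement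
   (k = 0, ..., 5); (6, 0) is the stopper. *)
Definition factor1 (p : nat * nat) : vec C d1 :=
  match p with
  | (0, i) => ketm C d1 0 i
  | (1, i) => ket C d1 i
  | (2, _) => ket C d1 0
  | (3, _) => ket C d1 1
  | (4, i) => ket C d1 (if odd i then 1 else 2)
  | (5, _) => ketm C d1 0 2
  | _ => ketall C d1
  end.

Definition factor2 (p : nat * nat) : vec C d2 :=
  match p with
  | (0, _) => ket C d2 0
  | (1, i) => ketm C d2 0 i
  | (2, i) => ket C d2 i
  | (3, i) => ketm C d2 0 i
  | (4, _) => ket C d2 1
  | (5, _) => ketm C d2 0 2
  | _ => ketall C d2
  end.

Definition factor3 (p : nat * nat) : vec C d3 :=
  match p with
  | (0, i) => ket C d3 i
  | (1, _) => ket C d3 0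
  | (2, i) => ketm C d3 0 i
  | (3, i) => ket C d3 i
  | (4, i) => ketm C d3 i.-1 i
  | (5, i) => ket C d3 i
  | _ => ketall C d3
  end.

Definition state p : vec3 C d1 d2 d3 := prod3 (factor1 p) (factor2 p) (factor3 p).

Definition indices k : seq nat :=
  match k with
  | 0 | 1 => rng 1 d1.-1
  | 2 => rng 1 d2.-1
  | 3 => rng d1 d2.-1
  | 4 => rng d2 d3.-1
  | 5 => rng d1 d3.-1
  | _ => [:: 0]
  end.

Definition tags : seq (nat * nat) := [seq (k, i) | k <- iota 0 7, i <- indices k].

Lemma lemma4_states_tags : lemma4_states C d1 d2 d3 = map state tags.
Proof. by rewrite /tags map_flatten -map_comp /= -!map_comp. Qed.

Lemma mem_tags k i : ((k, i) \in tags) = (k < 7)%N && (i \in indices k).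
Proof.
apply/allpairsPdep/andP => [[l [j [l7 jl [-> ->]]]] | [k7 ik]].
  by rewrite mem_iota in l7.
by exists k, i; split; rewrite // mem_iota k7.
Qed.

Lemma uniq_tags : uniq tags.
Proof.
apply: allpairs_uniq_dep; first exact: iota_uniq.
  by case=> [|[|[|[|[|[|k]]]]]] _; rewrite /= ?iota_uniq.
by move=> [k i] [l j] _ _ /= [-> ->].
Qed.

Lemma real_factor1 p : real_vec (factor1 p).
Proof. by case: p => -[|[|[|[|[|[|k]]]]]] i /=. Qed.

Lemma real_factor2 p : real_vec (factor2 p).
Proof. by case: p => -[|[|[|[|[|[|k]]]]]] i /=. Qed.

Lemma real_factor3 p : real_vec (factor3 p).
Proof. by case: p => -[|[|[|[|[|[|k]]]]]] i /=. Qed.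

#[local] Hint Resolve real_factor1 real_factor2 real_factor3 : core.

Lemma inner3_state p q :
  inner3 (state p) (state q) =
  dotv (factor1 p) (factor1 q) * dotv (factor2 p) (factor2 q) *
  dotv (factor3 p) (factor3 q).
Proof. exact: inner3_prod3. Qed.

Lemma inner3_act1_state (E : 'M[C]_d1) p q :
  inner3 (state p) (act1 E (state q)) =
  bform E (factor1 p) (factor1 q) * dotv (factor2 p) (factor2 q) *
  dotv (factor3 p) (factor3 q).
Proof. exact: inner3_act1_prod3. Qed.

Lemma inner3_act2_state (E : 'M[C]_d2) p q :
  inner3 (state p) (act2 E (state q)) =
  dotv (factor1 p) (factor1 q) * bform E (factor2 p) (factor2 q) *
  dotv (factor3 p) (factor3 q).
Proof. exact: inner3_act2_prod3. Qed.

Lemma inner3_act3_state (E : 'M[C]_d3) p q :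
  inner3 (state p) (act3 E (state q)) =
  dotv (factor1 p) (factor1 q) * dotv (factor2 p) (factor2 q) *
  bform E (factor3 p) (factor3 q).
Proof. exact: inner3_act3_prod3. Qed.

End States.
Arguments factor1 : clear implicits.
Arguments factor2 : clear implicits.
Arguments factor3 : clear implicits.
Arguments state : clear implicits.

Ltac decide_nat_test b :=
  first [ have -> : b = true by lia | have -> : b = false by lia | case: (boolP b) => ? ].

Ltac decide_ifs :=
  repeat match goal with
  (* lia cannot reason about odd, so the parity is recorded as x %% 2 *)
  | |- context [odd ?x] => have := modn2 x; case: (odd x) => /= ?
  | |- context [(?x < ?y)%N] => decide_nat_test (x < y)%N
  | |- context [@eq_op _ ?x ?y] =>
      let t := type of x in unify t nat; decide_nat_test (x == y)
  end; rewrite /=.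

Ltac simpl_dotv :=
  rewrite ?(dotv_ketmL, dotv_ketmR, dotv_ket_ket, dotv_ket_ketall, dotv_ketall_ket);
  decide_ifs.

Ltac solve_nonzero :=
  rewrite ?(subr0, sub0r, mulr0, mul0r, mulr1, mul1r, mulrN, mulNr, opprK, addr0, add0r);
  rewrite -?mulr2n ?mulf_eq0 ?mulrn_eq0 ?oppr_eq0 ?isqrt_eq0 ?oner_eq0 /=;
  first [done | lia].

Ltac solve_tag_side :=
  first [ by rewrite mem_tags /= ?mem_iota ?inE; lia
        | by case=> *; lia
        | rewrite /=; simpl_dotv; solve_nonzero ].

Section Lemma4States.
Variables (C : numClosedFieldType) (d1 d2 d3 : nat).
Hypotheses (h1 : (3 <= d1)%N) (h12 : (d1 <= d2)%N) (h23 : (d2 <= d3)%N).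
Local Notation psi := (state C d1 d2 d3).
Local Notation tagset := (tags d1 d2 d3).
Local Notation f1 := (factor1 C d1).
Local Notation f2 := (factor2 C d2).
Local Notation f3 := (factor3 C d3).

Lemma orth_states : {in tagset &, forall p q, p <> q -> inner3 (psi p) (psi q) = 0}.
Proof.
move=> [k i] [l j]; rewrite !mem_tags => /andP[k7 ik] /andP[l7 jl] neq.
have {neq} : (k != l) || (i != j).
  by case: eqP => [eq_kl|//]; case: eqP => [eq_ij|//]; case: neq; rewrite eq_kl eq_ij.
rewrite inner3_state.
case: k k7 ik => [|[|[|[|[|[|[|k]]]]]]] // _; case: l l7 jl => [|[|[|[|[|[|[|l]]]]]]] // _;
  rewrite /= ?mem_iota ?inE => ik jl neq; first [exfalso; lia | simpl_dotv; ring].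
Qed.

Section Party1.
Variable E : 'M[C]_d1.
Hypothesis OP : {in tagset &, forall p q, p <> q -> inner3 (psi p) (act1 E (psi q)) = 0}.
Local Notation e i j := (bform E (ket C d1 i) (ket C d1 j)).

Lemma bform_factor1_eq0 p q : p \in tagset -> q \in tagset -> p <> q ->
  dotv (f2 p) (f2 q) != 0 -> dotv (f3 p) (f3 q) != 0 -> bform E (f1 p) (f1 q) = 0.
Proof.
move=> tp tq neq nz2 nz3; have /eqP := OP tp tq neq.
by rewrite inner3_act1_state !mulf_eq0 (negbTE nz2) (negbTE nz3) !orbF => /eqP.
Qed.

Lemma party1_ket_diagonal : ket_diagonal E.
Proof.
move=> i j lt_i lt_j neq_ij.
have [i0|i_gt0] := posnP i.
  by subst i; apply: (@bform_factor1_eq0 (2, j) (1, j)); solve_tag_side.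
have [j0|j_gt0] := posnP j.
  by subst j; apply: (@bform_factor1_eq0 (1, i) (2, i)); solve_tag_side.
by apply: (@bform_factor1_eq0 (1, i) (1, j)); solve_tag_side.
Qed.

Lemma party1_diag_eq i : (i < d1)%N -> e i i = e 0 0.
Proof.
move=> lt_i; case: (posnP i) => [->//|i_gt0].
apply/esym/(diag_eq_of_ketall_ketm party1_ket_diagonal) => //; first lia.
by apply: (@bform_factor1_eq0 (6, 0) (0, i)); solve_tag_side.
Qed.

Lemma party1_scalar : E = (e 0 0)%:M.
Proof. exact: scalar_of_ket_diagonal party1_ket_diagonal party1_diag_eq. Qed.

End Party1.

Section Party2.
Variable E : 'M[C]_d2.
Hypothesis OP : {in tagset &, forall p q, p <> q -> inner3 (psi p) (act2 E (psi q)) = 0}.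
Local Notation e i j := (bform E (ket C d2 i) (ket C d2 j)).

Lemma bform_factor2_eq0 p q : p \in tagset -> q \in tagset -> p <> q ->
  dotv (f1 p) (f1 q) != 0 -> dotv (f3 p) (f3 q) != 0 -> bform E (f2 p) (f2 q) = 0.
Proof.
move=> tp tq neq nz1 nz3; have /eqP := OP tp tq neq.
by rewrite inner3_act2_state !mulf_eq0 (negbTE nz1) (negbTE nz3) orbF => /eqP.
Qed.

Lemma party2_offdiag_gt0 i j : (0 < i < d2)%N -> (0 < j < d2)%N -> i != j -> e i j = 0.
Proof. by move=> *; apply: (@bform_factor2_eq0 (2, i) (2, j)); solve_tag_side. Qed.

(* For d1 <= j no state carries |0> against |j> on party 2; family 5 offers |0-2> instead,
   and the entries between 2 and j are already known to vanish. *)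
Lemma party2_ket_diagonal : ket_diagonal E.
Proof.
move=> i j lt_i lt_j neq_ij.
have [i0|i_gt0] := posnP i; have [j0|j_gt0] := posnP j;
  try by subst; rewrite eqxx in neq_ij.
- subst i; have [lt_jd1|ge_jd1] := ltnP j d1.
    by apply: (@bform_factor2_eq0 (0, j) (2, j)); solve_tag_side.
  apply: (bform_ketmL_eq0 (b := 2)); last by apply: party2_offdiag_gt0; lia.
  by apply: (@bform_factor2_eq0 (5, j) (2, j)); solve_tag_side.
- subst j; have [lt_id1|ge_id1] := ltnP i d1.
    by apply: (@bform_factor2_eq0 (2, i) (0, i)); solve_tag_side.
  apply: (bform_ketmR_eq0 (b := 2)); last by apply: party2_offdiag_gt0; lia.
  by apply: (@bform_factor2_eq0 (2, i) (5, i)); solve_tag_side.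
- by apply: party2_offdiag_gt0; lia.
Qed.

Lemma party2_diag_eq i : (i < d2)%N -> e i i = e 0 0.
Proof.
move=> lt_i; case: (posnP i) => [->//|i_gt0].
apply/esym/(diag_eq_of_ketall_ketm party2_ket_diagonal) => //; first lia.
have [lt_id1|ge_id1] := ltnP i d1.
  by apply: (@bform_factor2_eq0 (6, 0) (1, i)); solve_tag_side.
by apply: (@bform_factor2_eq0 (6, 0) (3, i)); solve_tag_side.
Qed.

Lemma party2_scalar : E = (e 0 0)%:M.
Proof. exact: scalar_of_ket_diagonal party2_ket_diagonal party2_diag_eq. Qed.

End Party2.

Section Party3.
Variable E : 'M[C]_d3.
Hypothesis OP : {in tagset &, forall p q, p <> q -> inner3 (psi p) (act3 E (psi q)) = 0}.
Local Notation e i j := (bform E (ket C d3 i) (ket C d3 j)).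

Lemma bform_factor3_eq0 p q : p \in tagset -> q \in tagset -> p <> q ->
  dotv (f1 p) (f1 q) != 0 -> dotv (f2 p) (f2 q) != 0 -> bform E (f3 p) (f3 q) = 0.
Proof.
move=> tp tq neq nz1 nz2; have /eqP := OP tp tq neq.
by rewrite inner3_act3_state !mulf_eq0 (negbTE nz1) (negbTE nz2) /= => /eqP.
Qed.

Lemma party3_ket_diagonal : ket_diagonal E.
Proof.
move=> i j lt_i lt_j neq_ij.
have [i0|i_gt0] := posnP i; have [j0|j_gt0] := posnP j;
  try by subst; rewrite eqxx in neq_ij.
- subst i; have [lt_jd1|ge_jd1] := ltnP j d1.
    by apply: (@bform_factor3_eq0 (1, j) (0, j)); solve_tag_side.
  by apply: (@bform_factor3_eq0 (1, 2) (5, j)); solve_tag_side.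
- subst j; have [lt_id1|ge_id1] := ltnP i d1.
    by apply: (@bform_factor3_eq0 (0, i) (1, i)); solve_tag_side.
  by apply: (@bform_factor3_eq0 (5, i) (1, 2)); solve_tag_side.
- have [lt_id1|ge_id1] := ltnP i d1; have [lt_jd1|ge_jd1] := ltnP j d1.
  + by apply: (@bform_factor3_eq0 (0, i) (0, j)); solve_tag_side.
  + by apply: (@bform_factor3_eq0 (0, i) (5, j)); solve_tag_side.
  + by apply: (@bform_factor3_eq0 (5, i) (0, j)); solve_tag_side.
  + by apply: (@bform_factor3_eq0 (5, i) (5, j)); solve_tag_side.
Qed.

(* Beyond d2 the stopper only links neighbouring diagonal entries, through family 4. *)
Lemma party3_diag_eq i : (i < d3)%N -> e i i = e 0 0.
Proof.
elim: i => [//|i IH] lt_i; have [lt_id2|ge_id2] := ltnP i.+1 d2.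
  apply/esym/(diag_eq_of_ketall_ketm party3_ket_diagonal) => //; first lia.
  by apply: (@bform_factor3_eq0 (6, 0) (2, i.+1)); solve_tag_side.
rewrite -IH; last lia.
apply/esym/(diag_eq_of_ketall_ketm party3_ket_diagonal) => //; first lia.
by apply: (@bform_factor3_eq0 (6, 0) (4, i.+1)); solve_tag_side.
Qed.

Lemma party3_scalar : E = (e 0 0)%:M.
Proof. exact: scalar_of_ket_diagonal party3_ket_diagonal party3_diag_eq. Qed.

End Party3.

End Lemma4States.

Theorem lemma4 (C : numClosedFieldType) (d1 d2 d3 : nat)
  (h1 : (3 <= d1)%N) (h12 : (d1 <= d2)%N) (h23 : (d2 <= d3)%N) :
  let S := lemma4_states C d1 d2 d3 in
  size S = (d2 + 2 * d3 - 2)%N /\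
  pairwise_orth S /\
  (forall E : 'M[C]_d1, psd E -> OP1 S E -> exists c : C, E = c%:M) /\
  (forall E : 'M[C]_d2, psd E -> OP2 S E -> exists c : C, E = c%:M) /\
  (forall E : 'M[C]_d3, psd E -> OP3 S E -> exists c : C, E = c%:M).
Proof.
move=> S; split.
  by rewrite /S /lemma4_states !size_cat !size_map /rng !size_iota /=; lia.
have tagsP P := pairwise_nth_map (state C d1 d2 d3) (fun _ => 0) P (uniq_tags d1 d2 d3).
rewrite /S lemma4_states_tags; split.
  exact/(tagsP (fun u v => inner3 u v = 0))/orth_states.
split; [|split] => E _.
- move/(tagsP (fun u v => inner3 u (act1 E v) = 0)) => OP.
  by eexists; apply: party1_scalar OP.
- move/(tagsP (fun u v => inner3 u (act2 E v) = 0)) => OP.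
  by eexists; apply: party2_scalar OP.
- move/(tagsP (fun u v => inner3 u (act3 E v) = 0)) => OP.
  by eexists; apply: party3_scalar OP.
Qed.
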